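(* Let $\mathcal F$ be a proper filter on $\omega$ and consider the game $\mathfrak G(\mathcal F,[\omega]^{<\omega},\mathcal F)$. Then (1) player I has no winning strategy if and only if $\mathcal F$ is a non-meager P-filter; (2) player II never has a winning strategy.
   Context: A filter on $\omega$ is a family $\mathcal F\subseteq\mathcal P(\omega)$ closed under finite intersections and supersets and containing all cofinite sets; it is proper if all its members are infinite. $\mathcal P(\omega)$ is identified with $2^\omega$ with the product topology; ''meager'' refers to this topology. $\mathcal F$ is a P-filter if for every sequence $\langle X_n\rangle\subseteq\mathcal F$ there is $X\in\mathcal F$ with $X\setminus X_n$ finite for all $n$. Game $\mathfrak G(\mathcal X,[\omega]^{<\omega},\mathcal Z)$: at each stage $k\in\omega$, player I chooses $X_k\in\mathcal X$ and player II responds with a nonempty finite set $s_k\subseteq X_k$; II wins if $\bigcup_k s_k\in\mathcal Z$, otherwise I wins. *)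

From HB Require Import structures.
From mathcomp Require Import all_boot all_order all_algebra.
From mathcomp Require Import all_classical all_reals topology cantor.
Set Implicit Arguments. Unset Strict Implicit. Unset Printing Implicit Defensive.
Local Open Scope classical_set_scope.

Definition is_filter_omega (F : set (set nat)) : Prop :=
  [/\ (forall A B, F A -> F B -> F (A `&` B)),
      (forall A B, F A -> A `<=` B -> F B) &
      (forall A, finite_set (~` A) -> F A)].

Definition proper_filter_omega (F : set (set nat)) : Prop :=
  is_filter_omega F /\ (forall A, F A -> infinite_set A).

Definition P_filter (F : set (set nat)) : Prop :=
  forall Xn : nat -> set nat, (forall n, F (Xn n)) ->
    exists2 X, F X & forall n, finite_set (X `\` Xn n).

(* Topology: P(omega) identified with 2^omega via characteristic functions. *)
Definition char_of (A : set nat) : cantor_space := fun n => `[< A n >].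

Definition nowhere_dense (T : topologicalType) (A : set T) : Prop :=
  (closure A)° = set0.

Definition meager (T : topologicalType) (A : set T) : Prop :=
  exists N : nat -> set T, (forall n, nowhere_dense (N n)) /\
    A `<=` \bigcup_n N n.

Definition meager_family (F : set (set nat)) : Prop :=
  meager (char_of @` F).

(* The game G(F, [omega]^<omega, F).  At stage k player I plays X_k in F,
   player II answers a nonempty finite s_k ⊆ X_k; II wins iff the union of
   the s_k is in F. *)

(* A strategy for player I: given II's previous moves s_0..s_{k-1},
   returns I's move X_k, which must be in F. *)
Definition I_strategy (F : set (set nat)) (sigma : seq (set nat) -> set nat) :=
  forall h, F (sigma h).

Definition II_legal_vs (sigma : seq (set nat) -> set nat) (s : nat -> set nat) :=
  forall k, [/\ finite_set (s k), s k !=set0 & s k `<=` sigma (mkseq s k)].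

Definition I_winning_strategy (F : set (set nat)) (sigma : seq (set nat) -> set nat) :=
  I_strategy F sigma /\
  forall s, II_legal_vs sigma s -> ~ F (\bigcup_k s k).

(* A strategy for player II: given I's moves X_0..X_k (the list mkseq X k.+1,
   whose last element is the current move X_k), returns II's answer s_k. *)
Definition II_legal_move (s X : set nat) : Prop :=
  [/\ finite_set s, s !=set0 & s `<=` X].

Definition II_strategy (F : set (set nat)) (tau : seq (set nat) -> set nat) :=
  forall X : nat -> set nat, (forall n, F (X n)) ->
    forall k, II_legal_move (tau (mkseq X k.+1)) (X k).

Definition II_winning_strategy (F : set (set nat)) (tau : seq (set nat) -> set nat) :=
  II_strategy F tau /\
  forall X : nat -> set nat, (forall n, F (X n)) ->
    F (\bigcup_k tau (mkseq X k.+1)).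

From mathcomp Require Import all_boot all_classical topology cantor.
Set Implicit Arguments.
Unset Strict Implicit.
Unset Printing Implicit Defensive.
Local Open Scope classical_set_scope.

(* If F is not a P-filter, I wins by playing the finite intersections of a
   sequence in F with no pseudo-intersection in F: II's union is almost
   contained in each member of the sequence.
   If F is meager, F ⊆ ⋃ N_n with N_n nowhere dense, I wins by always
   playing a tail beyond a finite block [m, b) lying above II's previous
   moves and carrying a pattern such that every set following it on [m, b)
   is outside N_0, ..., N_n.  II's union misses all these blocks, so adding
   the patterns to it gives a superset that lies in no N_n, hence not in F.
   Conversely, let F be a non-meager P-filter and sigma a strategy of I.  A
   pseudo-intersection X ∈ F of sigma's answers to all histories of finite
   sets, together with a fast enough interval partition, makes every point of
   X beyond the next interval a legal answer to any history lying below the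
   current one; non-meagerness yields Y ⊆ X in F skipping infinitely many
   intervals.  II answers with the parts of Y between consecutive skipped
   intervals, and its union contains a tail of Y.
   Finally, against a strategy of II, I plays two interleaved runs, always
   offering the complement of all answers given so far in both runs; the two
   unions are disjoint, so they cannot both lie in the proper filter F. *)

Definition cylinder (b : cantor_space) (n : nat) : set cantor_space :=
  [set c | forall i, (i < n)%N -> c i = b i].

Lemma cylinder_nbhs (b : cantor_space) n : nbhs b (cylinder b n).
Proof.
elim: n => [|n IH]; first by near=> z => i; rewrite ltn0.
have bn : nbhs b (proj n @^-1` [set b n] : set cantor_space).
  apply: open_nbhs_nbhs; split => //.
  apply: open_comp; [move=> + _; exact: proj_continuous | exact: discrete_open].
apply: filterS (filterI IH bn) => c [cb cn] i.
by rewrite ltnS leq_eqVlt => /predU1P[->|/cb].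
Unshelve. all: end_near. Qed.

Lemma nbhs_cylinder (b : cantor_space) (A : set cantor_space) :
  nbhs b A -> exists n, cylinder b n `<=` A.
Proof.
pose G : set_system cantor_space := filter_from [set: nat] (cylinder b).
have FG : Filter G.
  apply: filter_from_filter; first by exists 0%N.
  move=> i j _ _; exists (maxn i j) => // c cij; split => k ki; apply: cij.
    by rewrite (leq_trans ki) // leq_maxl.
  by rewrite (leq_trans ki) // leq_maxr.
have : G --> b.
  apply/cvg_sup => i A' /= [B [[C _ <-] Cb] BA].
  by exists i.+1 => // c cb; apply: BA => /=; rewrite cb.
by move=> /(_ A) GA /GA [n _ nA]; exists n.
Qed.

Lemma nowhere_dense_cylinder (N : set cantor_space) : nowhere_dense N ->
  forall b n, exists y m, [/\ cylinder b n y, (n <= m)%N &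
    forall c, cylinder y m c -> ~ N c].
Proof.
move=> ND b n.
have [y [cby ncy]] : exists y, cylinder b n y /\ ~ closure N y.
  apply: contrapT => nex.
  have : (closure N)° b.
    apply: filterS (cylinder_nbhs b n) => y cy; apply: contrapT => ncy.
    by apply: nex; exists y.
  by rewrite ND.
have [B [yB NB]] : exists B, nbhs y B /\ ~ (N `&` B !=set0).
  apply: contrapT => nex; apply: ncy => B yB; apply: contrapT => NB.
  by apply: nex; exists B.
have [m mB] := nbhs_cylinder yB.
exists y, (maxn n m); split => //; first exact: leq_maxl.
move=> c cy Nc; apply: NB; exists c; split => //; apply: mB => i im.
by apply: cy; rewrite (leq_trans im) // leq_maxr.
Qed.

Definition agree (x y : nat -> bool) a b :=
  forall i, (a <= i < b)%N -> x i = y i.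

Lemma nowhere_dense_block (N : set cantor_space) (t u : nat -> bool) m b :
  nowhere_dense N -> (m <= b)%N ->
  exists b' u', [/\ (b <= b')%N, agree u' u m b &
    forall C : cantor_space, agree C t 0 m -> agree C u' m b' -> ~ N C].
Proof.
move=> ND mb.
pose x0 : cantor_space := fun i => if (i < m)%N then t i else u i.
have [y [b' [x0y bb' yN]]] := nowhere_dense_cylinder ND x0 b.
exists b', y; split => //.
  by move=> i /andP[mi ib]; rewrite x0y // /x0 ltnNge mi.
move=> C Ct Cy; apply: yN => i ib'.
case: (ltnP i m) => im; last by apply: Cy; rewrite im.
by rewrite Ct // x0y ?(leq_trans im mb) // /x0 im.
Qed.

Definition tuple_pattern m (t : m.-tuple bool) : nat -> bool := nth false t.

Lemma nowhere_dense_block_patterns (N : nat -> set cantor_space) m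
  (L : seq (nat * m.-tuple bool)) : (forall n, nowhere_dense (N n)) ->
  exists b u, (m <= b)%N /\ forall p, p \in L -> forall C : cantor_space,
    agree C (tuple_pattern p.2) 0 m -> agree C u m b -> ~ N p.1 C.
Proof.
move=> ND; elim: L => [|p L [b [u [mb IH]]]]; first by exists m, (fun=> false).
have [b' [u' [bb' u'u pN]]] :=
  nowhere_dense_block (tuple_pattern p.2) u (ND p.1) mb.
exists b', u'; split; first exact: leq_trans bb'.
move=> q; rewrite inE => /predU1P[->|qL] C Ct Cu; first exact: pN Ct Cu.
apply: (IH q qL C Ct) => i /andP[mi ib].
by rewrite Cu ?u'u ?mi ?ib // (leq_trans ib bb').
Qed.

(* Running over all [2^m] patterns below [m] makes the block work whatever
   [C] looks like below [m]. *)
Lemma nowhere_dense_block_uniform (N : nat -> set cantor_space) m k :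
  (forall n, nowhere_dense (N n)) ->
  exists b u, (m <= b)%N /\ forall C : cantor_space, agree C u m b ->
    forall n, (n <= k)%N -> ~ N n C.
Proof.
move=> ND; have [b [u [mb H]]] := nowhere_dense_block_patterns
  [seq (n, t) | n <- iota 0 k.+1, t <- enum {: m.-tuple bool}] ND.
exists b, u; split => // C Cu n nk.
apply: (H (n, [tuple of mkseq C m])) => //.
  by apply: allpairs_f; rewrite ?mem_iota ?mem_enum //= add0n ltnS.
by move=> i /andP[_ im]; rewrite /tuple_pattern /= nth_mkseq.
Qed.

Lemma finite_set_ubound (A : set nat) : finite_set A ->
  exists m, forall x, A x -> (x < m)%N.
Proof.
move=> /finite_seqP[s ->]; exists (\max_(x <- s) x).+1 => x xs.
by rewrite ltnS (leq_bigmax_seq (F := id)).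
Qed.

Lemma ubound_finite_set (A : set nat) m : (forall x, A x -> (x < m)%N) ->
  finite_set A.
Proof. by move=> Am; apply: (@sub_finite_set _ _ `I_m) (finite_II m). Qed.

Lemma history_ubound (h : seq (set nat)) : exists m, forall i, (i < size h)%N ->
  finite_set (nth set0 h i) -> forall x, nth set0 h i x -> (x < m)%N.
Proof.
elim: h => [|S h [m IH]]; first by exists 0%N.
have [mS SmS] : exists mS, finite_set S -> forall x, S x -> (x < mS)%N.
  have [/finite_set_ubound [mS SmS]|] := pselect (finite_set S).
    by exists mS.
  by exists 0%N.
exists (maxn mS m) => -[|i] /= ih fi x hx; rewrite leq_max.
  by rewrite (SmS fi x hx).
by rewrite (IH i ih fi x hx) orbT.
Qed.

Section ProperFilter.
Variable F : set (set nat).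
Hypothesis HF : proper_filter_omega F.

Lemma pfilterS A B : F A -> A `<=` B -> F B.
Proof. by have [[_ h _] _] := HF; apply: h. Qed.

Lemma pfilterI A B : F A -> F B -> F (A `&` B).
Proof. by have [[h _ _] _] := HF; apply: h. Qed.

Lemma pfilter_cofinite A : finite_set (~` A) -> F A.
Proof. by have [[_ _ h] _] := HF; apply: h. Qed.

Lemma pfilter_infinite A : F A -> infinite_set A.
Proof. by have [_ h] := HF; apply: h. Qed.

Lemma pfilter_set0 : ~ F set0.
Proof. by move=> /pfilter_infinite; apply; exact: finite_set0. Qed.

Lemma pfilterT : F setT.
Proof. by apply: pfilter_cofinite; rewrite setCT; exact: finite_set0. Qed.

Lemma pfilter_ge m : F [set x | (m <= x)%N].
Proof.
apply: pfilter_cofinite; apply: (@ubound_finite_set _ m) => x /negP.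
by rewrite -ltnNge.
Qed.

End ProperFilter.

Section MeagerStrategy.
Variables (F : set (set nat)) (N : nat -> set cantor_space).
Hypotheses (HF : proper_filter_omega F) (ND : forall n, nowhere_dense (N n))
  (FN : char_of @` F `<=` \bigcup_n N n).

Let hist_ub h := projT1 (cid (history_ubound h)).
Let block m k := cid (nowhere_dense_block_uniform m k ND).
Let block_end m k := projT1 (block m k).
Let block_pattern m k := projT1 (cid (projT2 (block m k))).

Let block_patternP m k : (m <= block_end m k)%N /\
  forall C : cantor_space, agree C (block_pattern m k) m (block_end m k) ->
    forall n, (n <= k)%N -> ~ N n C.
Proof. exact: projT2 (cid (projT2 (block m k))). Qed.

Definition meager_strategy (h : seq (set nat)) : set nat :=
  [set x | (block_end (hist_ub h) (size h) <= x)%N].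

Lemma meager_strategy_legal : I_strategy F meager_strategy.
Proof. by move=> h; exact: pfilter_ge. Qed.

Section Run.
Variable s : nat -> set nat.
Hypothesis Hs : II_legal_vs meager_strategy s.

Let M k := hist_ub (mkseq s k).
Let B k := block_end (M k) k.

Let run_ge k x : s k x -> (B k <= x)%N.
Proof.
by have [_ _ sk] := Hs k; move=> /sk; rewrite /meager_strategy /= size_mkseq.
Qed.

Let run_lt i k x : (i < k)%N -> s i x -> (x < M k)%N.
Proof.
move=> ik six; apply: (projT2 (cid (history_ubound (mkseq s k))) i);
  rewrite ?size_mkseq ?nth_mkseq //.
by have [] := Hs i.
Qed.

Let M_le_B k : (M k <= B k)%N.
Proof. by have [] := block_patternP (M k) k. Qed.

Let B_lt_M i k : (i < k)%N -> (B i < M k)%N.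
Proof.
move=> ik; have [_ [x six] _] := Hs i.
exact: leq_ltn_trans (run_ge six) (run_lt ik six).
Qed.

Let run_gap i x : (M i <= x < B i)%N -> ~ (\bigcup_k s k) x.
Proof.
move=> /andP[Mx xB] [j _ sjx].
have [ji|ij] := ltnP j i; first by have := run_lt ji sjx; rewrite ltnNge Mx.
suff : (B i <= x)%N by rewrite leqNgt xB.
move: ij; rewrite leq_eqVlt => /predU1P[->|ij]; first exact: run_ge sjx.
exact: leq_trans (ltnW (leq_trans (B_lt_M ij) (M_le_B j))) (run_ge sjx).
Qed.

Lemma meager_strategy_run_loses : ~ F (\bigcup_k s k).
Proof.
move=> Fs.
pose C := \bigcup_k s k `|`
  [set x | exists k, (M k <= x < B k)%N /\ block_pattern (M k) k x].
have FC : F C by apply: (pfilterS HF Fs) => x; left.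
have [n _ NC] := FN (ex_intro2 _ _ C FC erefl).
have [_ avoid] := block_patternP (M n) n.
apply: (avoid (char_of C)) NC => // i /andP[Mi iB].
apply: asbool_equiv_eqP; first exact: idP.
split => [[si|[k [/andP[Mk kB] Uk]]]|Ui]; last by right; exists n; rewrite Mi.
  by case: (run_gap (i := n) (x := i)) => //; rewrite Mi iB.
have [kn|nk|<-] // := ltngtP k n.
  by have := B_lt_M kn; rewrite ltnNge (leq_trans Mi (ltnW kB)).
by have := B_lt_M nk; rewrite ltnNge (leq_trans Mk (ltnW iB)).
Qed.

End Run.
End MeagerStrategy.

Lemma meager_I_wins F : proper_filter_omega F -> meager_family F ->
  exists sigma, I_winning_strategy F sigma.
Proof.
move=> HF [N [ND FN]]; exists (meager_strategy ND); split.
  exact: meager_strategy_legal.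
by move=> s Hs; exact: meager_strategy_run_loses.
Qed.

Lemma increasing_ge_id (f : nat -> nat) : (forall j, (f j < f j.+1)%N) ->
  forall j, (j <= f j)%N.
Proof. by move=> f_lt; elim=> // j IH; exact: leq_ltn_trans IH (f_lt j). Qed.

Lemma increasing_homo (f : nat -> nat) : (forall j, (f j < f j.+1)%N) ->
  {homo f : i j / (i <= j)%N}.
Proof.
by move=> f_lt; apply: ltnW_homo; apply: homo_ltn f_lt; exact: ltn_trans.
Qed.

Lemma fast_increasing (G : nat -> nat) : exists aj : nat -> nat,
  (forall j, (aj j < aj j.+1)%N) /\ (forall j, (G (aj j) <= aj j.+1)%N).
Proof.
exists (fun j => iter j (fun x => maxn x.+1 (G x)) 0).
by split=> j; rewrite [in X in (_ <= X)%N]iterS ?leq_maxl ?leq_maxr.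
Qed.

Definition skips (Y : set nat) (aj : nat -> nat) j :=
  forall x, Y x -> ~ (aj j <= x < aj j.+1)%N.

Lemma nonmeager_skips F (aj : nat -> nat) :
  (forall j, (j <= aj j)%N) -> ~ meager_family F ->
  exists2 A, F A & forall n, exists2 j, (n <= j)%N & skips A aj j.
Proof.
move=> ajj nM; apply: contrapT => nex; apply: nM.
pose N n : set cantor_space :=
  [set c | forall j, (n <= j)%N -> exists x, c x /\ (aj j <= x < aj j.+1)%N].
exists N; split.
  move=> n; apply/seteqP; split => // c /= /nbhs_cylinder [b bN].
  pose y : cantor_space := fun i => if (i < b)%N then c i else false.
  have cy : closure (N n) y by apply: bN => i ib; rewrite /y ib.
  have [d [Nd dy]] := cy _ (cylinder_nbhs y (aj (maxn n b).+1)).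
  have [x [dx /andP[lx xu]]] := Nd _ (leq_maxl n b).
  move: dx; rewrite dy // /y; case: ifP => // xb.
  have : (b <= x)%N.
    by apply: leq_trans lx; apply: leq_trans (ajj _); exact: leq_maxr.
  by rewrite leqNgt xb.
move=> _ [A FA <-] /=.
apply: contrapT => nA; apply: nex; exists A => // n.
apply: contrapT => nj; apply: nA; exists n => // j nj'.
apply: contrapT => nx; apply: nj; exists j => // x Ax xin.
by apply: nx; exists x; split => //; exact: asboolT.
Qed.

Lemma P_filter_strategy_pseudointersection F
  (sigma : seq (set nat) -> set nat) :
  proper_filter_omega F -> P_filter F -> I_strategy F sigma ->
  exists2 X, F X & forall hs : seq (seq nat), exists m, forall x,
    (m <= x)%N -> X x -> sigma [seq [set` l] | l <- hs] x.
Proof.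
move=> HF PF Isig.
pose Xn n := if @unpickle (seq (seq nat)) n is Some hs
  then sigma [seq [set` l] | l <- hs] else setT.
have [|X FX Xfin] := PF Xn.
  by move=> n; rewrite /Xn; case: unpickle => [hs|];
    [exact: Isig | exact: pfilterT].
exists X => // hs; have [m Hm] := finite_set_ubound (Xfin (pickle hs)).
exists m => x mx Xx; apply: contrapT => nsx.
by have := Hm x; rewrite /Xn pickleK ltnNge mx => /(_ (conj Xx nsx)).
Qed.

Definition tuple_mask a (t : a.-tuple bool) : seq nat := mask t (iota 0 a).

Lemma subseq_tuple_mask a (hs : seq (seq nat)) :
  (forall l, l \in hs -> subseq l (iota 0 a)) ->
  exists ts : seq (a.-tuple bool), hs = map (@tuple_mask a) ts.
Proof.
elim: hs => [|l hs IH] H; first by exists [::].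
have [ts ->] : exists ts : seq (a.-tuple bool), hs = map (@tuple_mask a) ts.
  by apply: IH => l' l'in; apply: H; rewrite inE l'in orbT.
have /subseqP[m sm ->] := H l (mem_head _ _).
have sm' : size m == a by rewrite sm size_iota.
by exists (Tuple sm' :: ts).
Qed.

Lemma bounded_histories_ubound (bnd : seq (seq nat) -> nat) a : exists M,
  forall hs, (size hs <= a)%N ->
    (forall l, l \in hs -> subseq l (iota 0 a)) -> (bnd hs <= M)%N.
Proof.
exists (\max_(k < a.+1) \max_(ts : k.-tuple (a.-tuple bool))
          bnd (map (@tuple_mask a) ts)) => hs sa Hs.
have [ts E] := subseq_tuple_mask Hs; rewrite E.
have szk : (size ts < a.+1)%N by rewrite ltnS -(size_map (@tuple_mask a)) -E.
apply: leq_trans (leq_bigmax (Ordinal szk)) => /=.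
exact: leq_trans (leq_bigmax (in_tuple ts)).
Qed.

Section SkippedIntervals.
Variables (F : set (set nat)) (Y : set nat) (aj : nat -> nat).
Hypotheses (HF : proper_filter_omega F) (FY : F Y)
  (aj_lt : forall j, (aj j < aj j.+1)%N).

Lemma skips_subsequence : (forall n, exists2 j, (n <= j)%N & skips Y aj j) ->
  exists jj : nat -> nat, [/\ forall k, (jj k < jj k.+1)%N,
    forall k, skips Y aj (jj k) &
    forall k, exists y, Y y /\ (aj (jj k).+1 <= y < aj (jj k.+1))%N].
Proof.
move=> skipsY.
have next j : exists j', [/\ (j < j')%N, skips Y aj j' &
    exists y, Y y /\ (aj j.+1 <= y < aj j')%N].
  have [y Yy ly] : exists2 y, Y y & (aj j.+1 <= y)%N.
    apply: contrapT => ne; apply: (pfilter_infinite HF FY).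
    apply: (@ubound_finite_set _ (aj j.+1)) => y Yy; rewrite ltnNge.
    by apply/negP => ly; apply: ne; exists y.
  have [j' lj' mj'] := skipsY (maxn j.+1 y.+1).
  exists j'; split => //; first exact: leq_trans (leq_maxl _ _) lj'.
  exists y; split => //; rewrite ly /=.
  exact: leq_trans (leq_maxr _ _) (leq_trans lj' (increasing_ge_id aj_lt _)).
have [nxt Hnxt] := choice next.
have [j0 _ mj0] := skipsY 0%N.
exists (fun k => iter k nxt j0); split => [k|[|k]|k] //=;
  by have [] := Hnxt (iter k nxt j0).
Qed.

Variables (sigma : seq (set nat) -> set nat) (jj : nat -> nat).
Hypotheses (Y_sigma : forall k (hs : seq (seq nat)), (size hs <= aj k)%N ->
     (forall l, l \in hs -> subseq l (iota 0 (aj k))) ->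
     forall y, Y y -> (aj k.+1 <= y)%N -> sigma [seq [set` l] | l <- hs] y)
  (jj_lt : forall k, (jj k < jj k.+1)%N)
  (jj_skips : forall k, skips Y aj (jj k))
  (jj_meets : forall k, exists y, Y y /\ (aj (jj k).+1 <= y < aj (jj k.+1))%N).

Definition between_skips k : set nat :=
  [set y | Y y /\ (aj (jj k).+1 <= y < aj (jj k.+1))%N].

Lemma between_skips_legal : II_legal_vs sigma between_skips.
Proof.
move=> k; split.
- by apply: (@ubound_finite_set _ (aj (jj k.+1))) => x [_ /andP[]].
- by have [y ?] := jj_meets k; exists y.
pose hs :=
  mkseq (fun i => [seq x <- iota 0 (aj (jj k)) | `[< between_skips i x >]]) k.
have -> : mkseq between_skips k = [seq [set` l] | l <- hs].
  rewrite /hs /mkseq -map_comp; apply/eq_in_map => i.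
  rewrite mem_iota => /andP[_ ik] /=.
  apply/seteqP; split => x /=; rewrite mem_filter mem_iota /=;
    last by move=> /andP[/asboolP].
  move=> rx; rewrite (asboolT rx) /= add0n.
  case: rx => _ /andP[_ /leq_trans]; apply.
  by apply: increasing_homo aj_lt _ _ _; exact: increasing_homo jj_lt _ _ ik.
move=> y [Yy /andP[ly _]]; apply: Y_sigma Yy ly.
  rewrite size_mkseq.
  exact: leq_trans (increasing_ge_id jj_lt k) (increasing_ge_id aj_lt _).
by move=> l /mapP[i _ ->]; exact: filter_subseq.
Qed.

Lemma between_skips_cover :
  Y `&` [set y | (aj (jj 0).+1 <= y)%N] `<=` \bigcup_k between_skips k.
Proof.
move=> y [Yy ly].
suff cover k : (y < aj (jj k).+1)%N -> (\bigcup_i between_skips i) y.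
  apply: (cover y); apply: leq_ltn_trans (aj_lt (jj y)).
  exact: leq_trans (increasing_ge_id jj_lt y) (increasing_ge_id aj_lt _).
elim: k => [|k IH] yk; first by rewrite ltnNge ly in yk.
have [/IH //|ky] := ltnP y (aj (jj k).+1).
have [yk1|ky1] := ltnP y (aj (jj k.+1)).
  by exists k => //; split => //; rewrite ky yk1.
by case: (@jj_skips k.+1 y Yy); rewrite ky1 yk.
Qed.

Lemma between_skips_wins : F (\bigcup_k between_skips k).
Proof.
exact: (pfilterS HF (pfilterI HF FY (pfilter_ge HF _)) between_skips_cover).
Qed.

End SkippedIntervals.

Lemma nonmeager_P_filter_I_loses F : proper_filter_omega F -> P_filter F ->
  ~ meager_family F -> ~ exists sigma, I_winning_strategy F sigma.
Proof.
move=> HF PF nM [sigma [Isig Wsig]].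
have [X FX Xsig] := P_filter_strategy_pseudointersection HF PF Isig.
have [bnd Hbnd] := choice Xsig.
have [G HG] := choice (bounded_histories_ubound bnd).
have [aj [aj_lt ajG]] := fast_increasing G.
have [A FA Askips] := nonmeager_skips (increasing_ge_id aj_lt) nM.
have FY := pfilterI HF FA FX.
have [|jj [jj_lt jj_skips jj_meets]] := skips_subsequence HF FY aj_lt.
  by move=> n; have [j nj Aj] := Askips n; exists j => // x [Ax _]; exact: Aj.
have Ysigma k hs : (size hs <= aj k)%N ->
    (forall l, l \in hs -> subseq l (iota 0 (aj k))) ->
    forall y, (A `&` X) y -> (aj k.+1 <= y)%N ->
    sigma [seq [set` l] | l <- hs] y.
  move=> shs lhs y [_ Xy] ly; apply: Hbnd Xy.
  exact: leq_trans (HG _ hs shs lhs) (leq_trans (ajG k) ly).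
apply: (Wsig _ (between_skips_legal aj_lt Ysigma jj_lt jj_meets)).
exact: (between_skips_wins HF FY aj_lt jj_lt jj_skips).
Qed.

Lemma not_P_filter_I_wins F : proper_filter_omega F -> ~ P_filter F ->
  exists sigma, I_winning_strategy F sigma.
Proof.
move=> HF nP.
have [Xn [FXn Xn_bad]] : exists Xn : nat -> set nat, (forall n, F (Xn n)) /\
    forall X, F X -> exists n, ~ finite_set (X `\` Xn n).
  apply: contrapT => nex; apply: nP => Xn FXn; apply: contrapT => nX.
  apply: nex; exists Xn; split => // X FX.
  apply: contrapT => nn; apply: nX; exists X => // n; apply: contrapT => h.
  by apply: nn; exists n.
pose meet k := [set x | forall i, (i <= k)%N -> Xn i x].
have Fmeet k : F (meet k).
  elim: k => [|k IH].
    by apply: (pfilterS HF (FXn 0%N)) => x Xx i; rewrite leqn0 => /eqP ->.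
  apply: (pfilterS HF (pfilterI HF IH (FXn k.+1))) => x [Ix Xx] i.
  by rewrite leq_eqVlt => /predU1P[-> //|]; rewrite ltnS; exact: Ix.
exists (fun h => meet (size h)); split => // s Hs Fs.
have [n] := Xn_bad _ Fs; apply.
apply: (@sub_finite_set _ _ (\bigcup_(k in `I_n) s k)).
  move=> x [[k _ skx] nx]; exists k => //=; rewrite ltnNge; apply/negP => nk.
  have [_ _ sk] := Hs k; have := sk _ skx; rewrite /= size_mkseq.
  by move=> /(_ n nk).
by apply: bigcup_finite; [exact: finite_II | move=> k _; have [] := Hs k].
Qed.

(* Equal to [~` u] on the finite sets [u] met below; the [setT] branch only
   makes it a legal move of I unconditionally. *)
Definition cofinite_guard (u : set nat) : set nat :=
  if pselect (finite_set u) then ~` u else setT.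

Lemma pfilter_cofinite_guard F u :
  proper_filter_omega F -> F (cofinite_guard u).
Proof.
move=> HF; rewrite /cofinite_guard; case: pselect => fu; last exact: pfilterT.
by apply: (pfilter_cofinite HF); rewrite setCK.
Qed.

Section TwinRuns.
Variables (F : set (set nat)) (tau : seq (set nat) -> set nat).
Hypotheses (HF : proper_filter_omega F) (Htau : II_strategy F tau).

(* A state is (I's moves in run A, I's moves in run B, all answers of II so
   far); run A is played before run B at each stage. *)
Definition twin_step (p : seq (set nat) * seq (set nat) * set nat) :=
  let: (hA, hB, u) := p in
  let xA := cofinite_guard u in let a := tau (rcons hA xA) in
  let xB := cofinite_guard (u `|` a) in let b := tau (rcons hB xB) in
  (rcons hA xA, rcons hB xB, u `|` a `|` b).

Definition twin_state k := iter k twin_step ([::], [::], set0).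
Definition movesA k := nth setT (twin_state k.+1).1.1 k.
Definition movesB k := nth setT (twin_state k.+1).1.2 k.
Definition used k := (twin_state k).2.
Definition answerA k := tau (mkseq movesA k.+1).
Definition answerB k := tau (mkseq movesB k.+1).

Lemma twin_state_size k :
  size (twin_state k).1.1 = k /\ size (twin_state k).1.2 = k.
Proof.
elim: k => [//|k [IH1 IH2]]; rewrite /twin_state iterS -/(twin_state k).
case: (twin_state k) IH1 IH2 => [[hA hB] u] /= h1 h2.
by rewrite !size_rcons h1 h2.
Qed.

Lemma twin_state_moves k :
  (twin_state k).1.1 = mkseq movesA k /\ (twin_state k).1.2 = mkseq movesB k.
Proof.
elim: k => [//|k [IH1 IH2]]; have [s1 s2] := twin_state_size k.
rewrite !mkseqS -IH1 -IH2 /movesA /movesB /twin_state iterS -/(twin_state k).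
move: s1 s2; case: (twin_state k) => [[hA hB] u] /= s1 s2.
by rewrite !nth_rcons s1 s2 ltnn eqxx.
Qed.

Lemma movesA_guard k : movesA k = cofinite_guard (used k).
Proof.
have [s1 _] := twin_state_size k.
rewrite /movesA /used /twin_state iterS -/(twin_state k); move: s1.
by case: (twin_state k) => [[hA hB] u] /= s1; rewrite nth_rcons s1 ltnn eqxx.
Qed.

Lemma movesB_guard k : movesB k = cofinite_guard (used k `|` answerA k).
Proof.
have [s1 s2] := twin_state_size k; have [m1 _] := twin_state_moves k.
rewrite /answerA mkseqS -m1 movesA_guard /movesB /used /twin_state iterS.
rewrite -/(twin_state k); move: s1 s2.
case: (twin_state k) => [[hA hB] u] /= s1 s2.
by rewrite nth_rcons s2 ltnn eqxx.
Qed.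

Lemma usedS k : used k.+1 = used k `|` answerA k `|` answerB k.
Proof.
have [m1 m2] := twin_state_moves k.
rewrite {1}/used /twin_state iterS -/(twin_state k).
rewrite /answerB mkseqS -m2 movesB_guard /answerA mkseqS -m1 movesA_guard /used.
by case: (twin_state k) => [[hA hB] u].
Qed.

Lemma answerA_legal k : II_legal_move (answerA k) (movesA k).
Proof.
by apply: Htau => n; rewrite movesA_guard; exact: pfilter_cofinite_guard.
Qed.

Lemma answerB_legal k : II_legal_move (answerB k) (movesB k).
Proof.
by apply: Htau => n; rewrite movesB_guard; exact: pfilter_cofinite_guard.
Qed.

Lemma used_finite k : finite_set (used k).
Proof.
elim: k => [|k IH]; first exact: finite_set0.
have [fa _ _] := answerA_legal k; have [fb _ _] := answerB_legal k.
by rewrite usedS !finite_setU.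
Qed.

Lemma movesA_compl k : movesA k = ~` used k.
Proof.
rewrite movesA_guard /cofinite_guard.
by case: pselect => // nf; case: (nf (used_finite k)).
Qed.

Lemma movesB_compl k : movesB k = ~` (used k `|` answerA k).
Proof.
rewrite movesB_guard /cofinite_guard; case: pselect => // nf; case: nf.
rewrite finite_setU; split; first exact: used_finite.
by have [] := answerA_legal k.
Qed.

Lemma used_homo i j : (i <= j)%N -> used i `<=` used j.
Proof.
elim: j => [|j IH]; first by rewrite leqn0 => /eqP ->.
rewrite leq_eqVlt => /predU1P[-> //|/IH ij] x /ij ux.
by rewrite usedS; left; left.
Qed.

Lemma answers_disjoint i j x : answerA i x -> answerB j x -> False.
Proof.
move=> ax bx.
have [_ _ sa] := answerA_legal i; have [_ _ sb] := answerB_legal j.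
have [ij|ji] := leqP i j.
  have := sb _ bx; rewrite movesB_compl; apply.
  move: ij; rewrite leq_eqVlt => /predU1P[<-|ij]; first by right.
  by left; apply: (used_homo ij); rewrite usedS; left; right.
have := sa _ ax; rewrite movesA_compl; apply.
by apply: (used_homo ji); rewrite usedS; right.
Qed.

Lemma II_strategy_not_winning : ~ II_winning_strategy F tau.
Proof.
have FA n : F (movesA n) by rewrite movesA_guard; exact: pfilter_cofinite_guard.
have FB n : F (movesB n) by rewrite movesB_guard; exact: pfilter_cofinite_guard.
move=> [_ W]; apply: (pfilter_set0 HF).
apply: (pfilterS HF (pfilterI HF (W _ FA) (W _ FB))).
by move=> x [[i _ ax] [j _ bx]]; exact: answers_disjoint ax bx.
Qed.

End TwinRuns.

Theorem theorem2p15 (F : set (set nat)) :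
  proper_filter_omega F ->
  ((~ exists sigma, I_winning_strategy F sigma) <->
     (P_filter F /\ ~ meager_family F)) /\
  (~ exists tau, II_winning_strategy F tau).
Proof.
move=> HF; split.
  split => [noI|[PF nM]]; last exact: nonmeager_P_filter_I_loses.
  split; first by apply: contrapT => nP; apply: noI; exact: not_P_filter_I_wins.
  by move=> M; apply: noI; exact: meager_I_wins.
by move=> [tau [Htau W]]; exact: II_strategy_not_winning Htau (conj Htau W).
Qed.
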